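(* For all complex $y$, $$\sum_{n=0}^{\infty}\frac{C_n}{2^n}R_n(y)=e^{y}\left(1-I_0(y)+\sum_{n=0}^{\infty}\frac{y^{2n+1}}{4^n(n!)^2(2n+1)}\right)=e^{y}\left(1+(y-1)I_0(y)+\frac{\pi y}{2}\big[I_0(y)\mathbf{L}_1(y)-I_1(y)\mathbf{L}_0(y)\big]\right).$$
   Context: For an integer $n\ge 0$ and complex $y$, $R_n(y)=e^y-1-\frac{y}{1!}-\frac{y^2}{2!}-\dots-\frac{y^n}{n!}=e^y-\sum_{k=0}^n\frac{y^k}{k!}$. $C_n=\frac{1}{n+1}\binom{2n}{n}$ are the Catalan numbers. $I_0(z)=\sum_{n\ge0}\frac{z^{2n}}{4^n(n!)^2}$ and $I_1=I_0'$ are the modified Bessel functions of the first kind; $\mathbf{L}_0,\mathbf{L}_1$ are the modified Struve functions of orders $0$ and $1$. *)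

From Stdlib Require Import Reals Factorial.
From Coquelicot Require Import Coquelicot.

Open Scope C_scope.

(* Sum of a complex series (meaningful when it converges): componentwise sums. *)
Definition CSeries (a : nat -> C) : C :=
  (Series (fun n => fst (a n)), Series (fun n => snd (a n))).

Definition Cexp (y : C) : C := CSeries (fun k => y ^ k / RtoC (INR (fact k))).

Definition Rrem (n : nat) (y : C) : C :=
  Cexp y - sum_n (fun k => y ^ k / RtoC (INR (fact k))) n.

Definition Catalan (n : nat) : R := (Binomial.C (2 * n) n / INR (n + 1))%R.

Definition BesselI0 (z : C) : C :=
  CSeries (fun n => z ^ (2 * n) / RtoC (4 ^ n * (INR (fact n)) ^ 2)%R).

Definition BesselI1 (z : C) : C :=
  CSeries (fun n => (z / RtoC 2) ^ (2 * n + 1) / RtoC (INR (fact n) * INR (fact (n + 1)))%R).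

(* Gamma at half-integers: Gamma(m + 1/2) = (2m)! sqrt(pi) / (4^m m!) *)
Definition Gamma_half (m : nat) : R :=
  (INR (fact (2 * m)) * sqrt PI / (4 ^ m * INR (fact m)))%R.

Definition StruveL0 (z : C) : C :=
  CSeries (fun k => (z / RtoC 2) ^ (2 * k + 1) / RtoC (Gamma_half (k + 1) ^ 2)%R).
Definition StruveL1 (z : C) : C :=
  CSeries (fun k => (z / RtoC 2) ^ (2 * k + 2) /
                    RtoC (Gamma_half (k + 1) * Gamma_half (k + 2))%R).

From Stdlib Require Import Reals Factorial Lra Lia FunctionalExtensionality.
From Coquelicot Require Import Coquelicot.
Open Scope R_scope.
Set Bullet Behavior "Strict Subproofs".

(** Write [W_k = sum_(j<k) C_j / 2^j]. Abel summation turns the partial sums of the series into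
    [W_(N+1) R_N(y) + sum_(k<=N) W_k y^k / k!]; as [W_k <= 2^k] and [R_N(y)] is the tail of the
    exponential series, the first term tends to 0, so the series sums to [H(y) = sum W_k y^k / k!].

    The rest are identities between entire functions, proved on coefficient sequences: evaluation
    at [y] is linear and multiplicative, and each differential equation used below determines a
    power series from its constant term, the coefficients being computed one by one.
    [H' = H + w] with [w(y) = sum C_k (y/2)^k / k!], and [w = e^y (I0 - I1)] since both solve
    [y f'' + (2 - 2y) f' - f = 0] with [f(0) = 1]; as [(1 - I0 + J)' = I0 - I1], this gives
    [H = e^y (1 - I0 + J)]. For the Struve form, [I0' = I1], [(y I1)' = y I0],
    [L0' = 2/pi + L1] and [(y L1)' = y L0] show that [y I0 + (pi/2) y (I0 L1 - I1 L0)] has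
    derivative [I0] and vanishes at 0, exactly like [J]. *)

(** * Complex series and real power series at a complex point *)

Lemma fst_sum_n (a : nat -> C) n : fst (sum_n a n) = sum_n (fun k => fst (a k)) n.
Proof.
  induction n as [|n IH]; [now rewrite !sum_O|].
  rewrite !sum_Sn; simpl; now rewrite <- IH.
Qed.

Lemma snd_sum_n (a : nat -> C) n : snd (sum_n a n) = sum_n (fun k => snd (a k)) n.
Proof.
  induction n as [|n IH]; [now rewrite !sum_O|].
  rewrite !sum_Sn; simpl; now rewrite <- IH.
Qed.

Lemma is_lim_seq_C (u : nat -> C) (l1 l2 : R) :
  is_lim_seq (fun n => fst (u n)) l1 -> is_lim_seq (fun n => snd (u n)) l2 ->
  filterlim u eventually (locally (l1, l2)).
Proof.
  intros H1 H2 P [eps HP].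
  assert (E1 : eventually (fun n => ball l1 eps (fst (u n))))
    by exact (H1 _ (locally_ball l1 eps)).
  assert (E2 : eventually (fun n => ball l2 eps (snd (u n))))
    by exact (H2 _ (locally_ball l2 eps)).
  unfold filtermap; generalize (filter_and _ _ E1 E2); apply filter_imp.
  intros n [Hfst Hsnd].
  now apply HP.
Qed.

Lemma CSeries_ext (a b : nat -> C) : (forall n, a n = b n) -> CSeries a = CSeries b.
Proof. intros H; unfold CSeries; f_equal; apply Series_ext; intros n; now rewrite H. Qed.

Lemma CSeries_incr_1 (a : nat -> C) : a 0%nat = RtoC 0 -> CSeries a = CSeries (fun k => a (S k)).
Proof. intros H; unfold CSeries; f_equal; apply Series_incr_1_aux; now rewrite H. Qed.

Definition CPS_term (c : nat -> R) (y : C) (k : nat) : C := (RtoC (c k) * y ^ k)%C.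
Definition CPSeries (c : nat -> R) (y : C) : C := CSeries (CPS_term c y).

Definition entire (c : nat -> R) : Prop :=
  forall r, 0 <= r -> ex_series (fun k => Rabs (c k) * r ^ k).

Lemma fst_CPS_term c y k : fst (CPS_term c y k) = c k * fst (y ^ k)%C.
Proof. unfold CPS_term; simpl; ring. Qed.

Lemma snd_CPS_term c y k : snd (CPS_term c y k) = c k * snd (y ^ k)%C.
Proof. unfold CPS_term; simpl; ring. Qed.

Lemma Rabs_fst_CPS_term_le c y k : Rabs (fst (CPS_term c y k)) <= Rabs (c k) * Cmod y ^ k.
Proof.
  rewrite fst_CPS_term, Rabs_mult, <- Cmod_pow.
  apply Rmult_le_compat_l; [apply Rabs_pos | apply re_le_Cmod].
Qed.

Lemma Rabs_snd_CPS_term_le c y k : Rabs (snd (CPS_term c y k)) <= Rabs (c k) * Cmod y ^ k.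
Proof.
  rewrite snd_CPS_term, Rabs_mult, <- Cmod_pow.
  apply Rmult_le_compat_l; [apply Rabs_pos|].
  eapply Rle_trans; [apply Rmax_r | apply Rmax_Cmod].
Qed.

Lemma ex_series_Rabs_dominated (u c : nat -> R) r :
  entire c -> 0 <= r -> (forall k, Rabs (u k) <= Rabs (c k) * r ^ k) ->
  ex_series (fun k => Rabs (u k)).
Proof.
  intros Hc Hr Hu.
  apply (@ex_series_le R_AbsRing R_CompleteNormedModule _ (fun k => Rabs (c k) * r ^ k));
    [|exact (Hc r Hr)].
  intros k; change norm with Rabs; simpl; now rewrite Rabs_Rabsolu.
Qed.

Lemma ex_series_Rabs_fst_CPS_term c y :
  entire c -> ex_series (fun k => Rabs (fst (CPS_term c y k))).
Proof.
  intros Hc; apply (ex_series_Rabs_dominated _ c (Cmod y) Hc (Cmod_ge_0 y)).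
  apply Rabs_fst_CPS_term_le.
Qed.

Lemma ex_series_Rabs_snd_CPS_term c y :
  entire c -> ex_series (fun k => Rabs (snd (CPS_term c y k))).
Proof.
  intros Hc; apply (ex_series_Rabs_dominated _ c (Cmod y) Hc (Cmod_ge_0 y)).
  apply Rabs_snd_CPS_term_le.
Qed.

Lemma ex_series_fst_CPS_term c y : entire c -> ex_series (fun k => fst (CPS_term c y k)).
Proof. intros Hc; apply ex_series_Rabs, ex_series_Rabs_fst_CPS_term, Hc. Qed.

Lemma ex_series_snd_CPS_term c y : entire c -> ex_series (fun k => snd (CPS_term c y k)).
Proof. intros Hc; apply ex_series_Rabs, ex_series_Rabs_snd_CPS_term, Hc. Qed.

(** * Coefficient sequences *)

Definition PS_lin (a : R) (c : nat -> R) (b : R) (d : nat -> R) (k : nat) : R :=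
  a * c k + b * d k.
Definition PS_one (k : nat) : R := match k with O => 1 | S _ => 0 end.
Definition PS_zero (k : nat) : R := 0.

Lemma PS_incr_1_O (c : nat -> R) : PS_incr_1 c 0 = 0.
Proof. reflexivity. Qed.

Lemma ex_series_exp x : ex_series (fun k => x ^ k / INR (fact k)).
Proof.
  destruct (exist_exp x) as [l Hl]; exists l.
  apply is_series_Reals in Hl.
  eapply is_series_ext; [|exact Hl]; intros n; simpl; unfold Rdiv; ring.
Qed.

Lemma entire_exp_bound c M B :
  0 <= B -> (forall k, Rabs (c k) <= M * B ^ k / INR (fact k)) -> entire c.
Proof.
  intros HB Hc r Hr.
  apply (@ex_series_le R_AbsRing R_CompleteNormedModule _
           (fun k => M * ((B * r) ^ k / INR (fact k)))).
  - intros k; change norm with Rabs; simpl.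
    rewrite Rabs_pos_eq by (apply Rmult_le_pos; [apply Rabs_pos | now apply pow_le]).
    rewrite Rpow_mult_distr.
    replace (M * (B ^ k * r ^ k / INR (fact k)))
      with (M * B ^ k / INR (fact k) * r ^ k) by (unfold Rdiv; ring).
    apply Rmult_le_compat_r; [now apply pow_le | apply Hc].
  - apply (@ex_series_scal R_AbsRing R_NormedModule), ex_series_exp.
Qed.

Lemma entire_lin a c b d : entire c -> entire d -> entire (PS_lin a c b d).
Proof.
  intros Hc Hd r Hr.
  apply (@ex_series_le R_AbsRing R_CompleteNormedModule _
     (fun k => Rabs a * (Rabs (c k) * r ^ k) + Rabs b * (Rabs (d k) * r ^ k))).
  - intros k; change norm with Rabs; simpl; unfold PS_lin.
    assert (0 <= r ^ k) by now apply pow_le.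
    rewrite Rabs_pos_eq by (apply Rmult_le_pos; [apply Rabs_pos | easy]).
    eapply Rle_trans; [apply Rmult_le_compat_r; [easy | apply Rabs_triang]|].
    rewrite !Rabs_mult; nra.
  - apply (@ex_series_plus R_AbsRing R_NormedModule);
      apply (@ex_series_scal R_AbsRing R_NormedModule); auto.
Qed.

Lemma entire_incr_1 c : entire c -> entire (PS_incr_1 c).
Proof.
  intros Hc r Hr; apply ex_series_incr_1.
  eapply ex_series_ext; [|apply (ex_series_scal_r r), (Hc r Hr)].
  intros k; simpl; ring.
Qed.

Lemma entire_mult c d : entire c -> entire d -> entire (PS_mult c d).
Proof.
  intros Hc Hd r Hr.
  set (a := fun k => Rabs (c k) * r ^ k); set (b := fun k => Rabs (d k) * r ^ k).
  apply (@ex_series_le R_AbsRing R_CompleteNormedModule _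
           (fun n => sum_f_R0 (fun k => a k * b (n - k)%nat) n)).
  - intros n; change norm with Rabs; simpl.
    rewrite Rabs_pos_eq by (apply Rmult_le_pos; [apply Rabs_pos | now apply pow_le]).
    eapply Rle_trans; [apply Rmult_le_compat_r; [now apply pow_le | apply Rsum_abs]|].
    rewrite Rmult_comm, scal_sum; right; apply sum_eq; intros i Hi.
    unfold a, b; rewrite Rabs_mult.
    replace (r ^ n) with (r ^ i * r ^ (n - i)) by (rewrite <- pow_add; f_equal; lia).
    ring.
  - eexists; apply is_series_mult_pos;
      [apply Series_correct, Hc; auto | apply Series_correct, Hd; auto | |];
      intros; apply Rmult_le_pos; try apply Rabs_pos; now apply pow_le.
Qed.

Lemma entire_one : entire PS_one.
Proof.
  apply (entire_exp_bound _ 1 1); [lra|]; intros [|k]; unfold PS_one.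
  - rewrite Rabs_R1; simpl; lra.
  - rewrite Rabs_R0, pow1.
    apply Rmult_le_pos; [lra | apply Rlt_le, Rinv_0_lt_compat, INR_fact_lt_0].
Qed.

Lemma CPSeries_lin a b c d y : entire c -> entire d ->
  CPSeries (PS_lin a c b d) y = (RtoC a * CPSeries c y + RtoC b * CPSeries d y)%C.
Proof.
  intros Hc Hd; unfold CPSeries, CSeries, Cplus, Cmult, RtoC.
  apply injective_projections; cbn [fst snd].
  - rewrite (Series_ext _ (fun k => a * fst (CPS_term c y k) + b * fst (CPS_term d y k)))
      by (intros k; rewrite !fst_CPS_term; unfold PS_lin; ring).
    rewrite Series_plus, !Series_scal_l; [ring| |];
      apply (@ex_series_scal R_AbsRing R_NormedModule), ex_series_fst_CPS_term; auto.
  - rewrite (Series_ext _ (fun k => a * snd (CPS_term c y k) + b * snd (CPS_term d y k)))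
      by (intros k; rewrite !snd_CPS_term; unfold PS_lin; ring).
    rewrite Series_plus, !Series_scal_l; [ring| |];
      apply (@ex_series_scal R_AbsRing R_NormedModule), ex_series_snd_CPS_term; auto.
Qed.

Lemma CPSeries_incr_1 c y : entire c -> CPSeries (PS_incr_1 c) y = (y * CPSeries c y)%C.
Proof.
  intros Hc; unfold CPSeries, CSeries; destruct y as [u v].
  apply injective_projections; cbn [fst snd Cmult].
  - rewrite Series_incr_1 by now apply ex_series_fst_CPS_term, entire_incr_1.
    rewrite (Series_ext _ (fun k => u * fst (CPS_term c (u, v) k) - v * snd (CPS_term c (u, v) k)))
      by (intros k; rewrite !fst_CPS_term, snd_CPS_term; simpl; ring).
    rewrite Series_minus, !Series_scal_l, fst_CPS_term, PS_incr_1_O; [ring| |];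
      apply (@ex_series_scal R_AbsRing R_NormedModule);
      auto using ex_series_fst_CPS_term, ex_series_snd_CPS_term.
  - rewrite Series_incr_1 by now apply ex_series_snd_CPS_term, entire_incr_1.
    rewrite (Series_ext _ (fun k => u * snd (CPS_term c (u, v) k) + v * fst (CPS_term c (u, v) k)))
      by (intros k; rewrite !snd_CPS_term, fst_CPS_term; simpl; ring).
    rewrite Series_plus, !Series_scal_l, snd_CPS_term, PS_incr_1_O; [ring| |];
      apply (@ex_series_scal R_AbsRing R_NormedModule);
      auto using ex_series_fst_CPS_term, ex_series_snd_CPS_term.
Qed.

Lemma Series_Cauchy_product (a b : nat -> R) :
  ex_series (fun n => Rabs (a n)) -> ex_series (fun n => Rabs (b n)) ->
  is_series (fun n => sum_f_R0 (fun k => a k * b (n - k)%nat) n) (Series a * Series b).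
Proof.
  intros Ha Hb; apply is_series_mult; auto;
    apply Series_correct, ex_series_Rabs; assumption.
Qed.

(* The real and imaginary parts of the product are combinations of four real
   Cauchy products, each of which converges absolutely. *)
Lemma CPSeries_mult c d y : entire c -> entire d ->
  CPSeries (PS_mult c d) y = (CPSeries c y * CPSeries d y)%C.
Proof.
  intros Hc Hd.
  set (f1 := fun k => fst (CPS_term c y k)); set (s1 := fun k => snd (CPS_term c y k)).
  set (f2 := fun k => fst (CPS_term d y k)); set (s2 := fun k => snd (CPS_term d y k)).
  assert (Hf1 := ex_series_Rabs_fst_CPS_term c y Hc).
  assert (Hs1 := ex_series_Rabs_snd_CPS_term c y Hc).
  assert (Hf2 := ex_series_Rabs_fst_CPS_term d y Hd).
  assert (Hs2 := ex_series_Rabs_snd_CPS_term d y Hd).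
  assert (Hterm : forall n i, (i <= n)%nat ->
    (CPS_term c y i * CPS_term d y (n - i) = RtoC (c i * d (n - i)%nat) * y ^ n)%C).
  { intros n i Hi; unfold CPS_term; rewrite RtoC_mult.
    replace (y ^ n)%C with (y ^ i * y ^ (n - i))%C
      by (rewrite <- Cpow_add_r; f_equal; lia).
    ring. }
  unfold CPSeries, CSeries, Cmult; apply injective_projections; cbn [fst snd];
    apply is_series_unique.
  - eapply is_series_ext;
      [|apply (@is_series_minus R_AbsRing R_NormedModule);
        [apply (Series_Cauchy_product f1 f2) | apply (Series_Cauchy_product s1 s2)]; assumption].
    intros n; change (plus ?x (opp ?z)) with (x - z); symmetry.
    rewrite fst_CPS_term; unfold PS_mult.
    rewrite (Rmult_comm _ (fst _)), scal_sum, <- minus_sum; apply sum_eq; intros i Hi.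
    transitivity (fst (RtoC (c i * d (n - i)%nat) * y ^ n)%C); [simpl; ring|].
    rewrite <- Hterm by lia; unfold f1, f2, s1, s2; simpl; ring.
  - eapply is_series_ext;
      [|apply (@is_series_plus R_AbsRing R_NormedModule);
        [apply (Series_Cauchy_product f1 s2) | apply (Series_Cauchy_product s1 f2)]; assumption].
    intros n; change (plus ?x ?z) with (x + z); symmetry.
    rewrite snd_CPS_term; unfold PS_mult.
    rewrite (Rmult_comm _ (snd _)), scal_sum, <- plus_sum; apply sum_eq; intros i Hi.
    transitivity (snd (RtoC (c i * d (n - i)%nat) * y ^ n)%C); [simpl; ring|].
    rewrite <- Hterm by lia; unfold f1, f2, s1, s2; simpl; ring.
Qed.

Lemma is_series_PS_one : is_series PS_one 1.
Proof.
  assert (Hsum : forall n, sum_n PS_one n = 1).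
  { induction n as [|n IH]; [now rewrite sum_O | rewrite sum_Sn, IH; apply Rplus_0_r]. }
  apply (filterlim_ext (fun _ => 1)); [intros n; now rewrite Hsum | apply filterlim_const].
Qed.

Lemma CPSeries_one y : CPSeries PS_one y = RtoC 1.
Proof.
  assert (Hterm : forall n, CPS_term PS_one y n = RtoC (PS_one n)).
  { intros [|n]; unfold CPS_term; simpl; ring. }
  unfold CPSeries, CSeries, RtoC; apply injective_projections; cbn [fst snd];
    apply is_series_unique.
  - eapply is_series_ext; [|exact is_series_PS_one]; intros n; now rewrite Hterm.
  - assert (H0 := is_series_scal_r 0 _ _ is_series_PS_one); rewrite Rmult_0_r in H0.
    eapply is_series_ext; [|exact H0]; intros n; rewrite Hterm; simpl; ring.
Qed.

Lemma PS_derive_lin a c b d : PS_derive (PS_lin a c b d) = PS_lin a (PS_derive c) b (PS_derive d).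
Proof. apply functional_extensionality; intros k; unfold PS_derive, PS_lin; ring. Qed.

Lemma PS_incr_1_lin a (c : nat -> R) b (d : nat -> R) :
  PS_incr_1 (PS_lin a c b d) = PS_lin a (PS_incr_1 c) b (PS_incr_1 d).
Proof.
  apply functional_extensionality; intros [|k]; unfold PS_lin; [|easy].
  simpl; unfold zero; simpl; ring.
Qed.

Lemma PS_mult_lin_r a c b d f :
  PS_mult f (PS_lin a c b d) = PS_lin a (PS_mult f c) b (PS_mult f d).
Proof.
  apply functional_extensionality; intros n; unfold PS_mult, PS_lin.
  rewrite !scal_sum, <- plus_sum; apply sum_eq; intros; ring.
Qed.

Lemma PS_mult_incr_1_l (c d : nat -> R) : PS_mult (PS_incr_1 c) d = PS_incr_1 (PS_mult c d).
Proof.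
  apply functional_extensionality; intros [|m]; unfold PS_mult; [simpl; unfold zero; simpl; ring|].
  rewrite decomp_sum by lia; simpl pred; rewrite PS_incr_1_O, Rmult_0_l, Rplus_0_l.
  now apply sum_eq.
Qed.

Lemma PS_mult_incr_1_r (c d : nat -> R) : PS_mult c (PS_incr_1 d) = PS_incr_1 (PS_mult c d).
Proof.
  apply functional_extensionality; intros [|m]; [unfold PS_mult; simpl; unfold zero; simpl; ring|].
  change (PS_incr_1 (PS_mult c d) (S m)) with (PS_mult c d m); unfold PS_mult.
  rewrite tech5, Nat.sub_diag, PS_incr_1_O, Rmult_0_r, Rplus_0_r.
  apply sum_eq; intros i Hi; now replace (S m - i)%nat with (S (m - i)) by lia.
Qed.

Lemma PS_mult_one_r c : PS_mult c PS_one = c.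
Proof.
  apply functional_extensionality; intros [|m]; unfold PS_mult; [simpl; ring|].
  rewrite tech5, Nat.sub_diag, sum_eq_R0; [simpl; ring|].
  intros i Hi; replace (S m - i)%nat with (S (m - i)) by lia; simpl; ring.
Qed.

Lemma PS_mult_zero_r c : PS_mult c PS_zero = PS_zero.
Proof.
  apply functional_extensionality; intros n; unfold PS_mult, PS_zero.
  apply sum_eq_R0; intros; ring.
Qed.

Lemma PS_derive_mult c d :
  PS_derive (PS_mult c d) = PS_lin 1 (PS_mult (PS_derive c) d) 1 (PS_mult c (PS_derive d)).
Proof.
  apply functional_extensionality; intros n; unfold PS_derive at 1, PS_lin, PS_mult at 1.
  transitivity (sum_f_R0 (fun k => INR k * (c k * d (S n - k)%nat)) (S n) +
                sum_f_R0 (fun k => INR (S n - k) * (c k * d (S n - k)%nat)) (S n)).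
  { rewrite scal_sum, <- plus_sum; apply sum_eq; intros k Hk.
    rewrite minus_INR by lia; ring. }
  rewrite decomp_sum, tech5, Nat.sub_diag by lia; simpl pred; rewrite INR_0.
  unfold PS_mult, PS_derive; ring_simplify; f_equal; apply sum_eq; intros i Hi.
  - simpl (S n - S i)%nat; ring.
  - replace (S n - i)%nat with (S (n - i)) by lia; ring.
Qed.

Lemma PS_derive_incr_1 (c : nat -> R) :
  PS_derive (PS_incr_1 c) = PS_lin 1 c 1 (PS_incr_1 (PS_derive c)).
Proof.
  apply functional_extensionality; intros [|m]; unfold PS_derive, PS_lin; simpl;
    unfold zero; simpl; ring.
Qed.

Lemma PS_derive_one : PS_derive PS_one = PS_zero.
Proof. apply functional_extensionality; intros k; unfold PS_derive, PS_zero; simpl; ring. Qed.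

Lemma PS_derive_eq_zero f : PS_derive f = PS_zero -> f 0%nat = 0 -> f = PS_zero.
Proof.
  intros H H0; apply functional_extensionality; intros [|n]; [easy|].
  assert (E := f_equal (fun g => g n) H); unfold PS_derive, PS_zero in E; simpl in E.
  destruct (Rmult_integral _ _ E) as [E'|E']; [|easy].
  now destruct (not_0_INR (S n)).
Qed.

Lemma PS_derive_eq_self f : PS_derive f = f -> f 0%nat = 0 -> f = PS_zero.
Proof.
  intros H H0; apply functional_extensionality; intros n; unfold PS_zero.
  induction n as [|n IH]; [easy|].
  assert (E := f_equal (fun g => g n) H); unfold PS_derive in E; simpl in E.
  rewrite IH in E; destruct (Rmult_integral _ _ E) as [E'|E']; [|easy].
  now destruct (not_0_INR (S n)).
Qed.

(** * Even and odd series *)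

Definition PS_even (u : nat -> R) (k : nat) : R := if Nat.even k then u (Nat.div2 k) else 0.
Definition PS_odd (u : nat -> R) (k : nat) : R := if Nat.even k then 0 else u (Nat.div2 k).

Lemma PS_even_double u m : PS_even u (2 * m) = u m.
Proof. unfold PS_even; now rewrite Nat.even_even, Nat.div2_double. Qed.

Lemma PS_even_succ_double u m : PS_even u (S (2 * m)) = 0.
Proof. unfold PS_even; now rewrite Nat.even_succ, Nat.odd_even. Qed.

Lemma PS_odd_double u m : PS_odd u (2 * m) = 0.
Proof. unfold PS_odd; now rewrite Nat.even_even. Qed.

Lemma PS_odd_succ_double u m : PS_odd u (S (2 * m)) = u m.
Proof. unfold PS_odd; now rewrite Nat.even_succ, Nat.odd_even, Nat.div2_succ_double. Qed.

Lemma even_or_succ_double n : exists m, n = (2 * m)%nat \/ n = S (2 * m).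
Proof. destruct (Nat.Even_or_Odd n) as [[m ->] | [m ->]]; exists m; lia. Qed.

Lemma Series_double (f : nat -> R) : ex_series f -> (forall m, f (S (2 * m)) = 0) ->
  Series (fun m => f (2 * m)%nat) = Series f.
Proof.
  intros Hf Hodd; apply is_series_unique.
  assert (Hsum : forall n, sum_n (fun m => f (2 * m)%nat) n = sum_n f (S (2 * n))).
  { induction n as [|n IH]; [rewrite sum_Sn, !sum_O, Hodd; change plus with Rplus; simpl; ring|].
    rewrite (sum_Sn _ n), IH.
    replace (S (2 * S n)) with (S (S (S (2 * n)))) by lia.
    rewrite (sum_Sn f (S (S (2 * n)))), (sum_Sn f (S (2 * n))).
    replace (S (S (2 * n))) with (2 * S n)%nat by lia.
    rewrite Hodd; symmetry; apply Rplus_0_r. }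
  unfold is_series; eapply filterlim_ext; [intros n; symmetry; apply Hsum|].
  eapply filterlim_comp; [|apply Series_correct, Hf].
  apply eventually_subseq; intros; lia.
Qed.

Lemma Series_succ_double (f : nat -> R) : ex_series f -> (forall m, f (2 * m)%nat = 0) ->
  Series (fun m => f (S (2 * m))) = Series f.
Proof.
  intros Hf Heven; apply is_series_unique.
  assert (Hsum : forall n, sum_n (fun m => f (S (2 * m))) n = sum_n f (S (2 * n))).
  { induction n as [|n IH].
    { rewrite sum_Sn, !sum_O; replace (f 0%nat) with 0 by (symmetry; apply (Heven 0%nat)).
      change plus with Rplus; simpl; ring. }
    rewrite (sum_Sn _ n), IH.
    replace (S (2 * S n)) with (S (S (S (2 * n)))) by lia.
    rewrite (sum_Sn f (S (S (2 * n)))), (sum_Sn f (S (2 * n))).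
    replace (S (S (2 * n))) with (2 * S n)%nat by lia.
    rewrite Heven; change plus with Rplus; now rewrite Rplus_0_r. }
  unfold is_series; eapply filterlim_ext; [intros n; symmetry; apply Hsum|].
  eapply filterlim_comp; [|apply Series_correct, Hf].
  apply eventually_subseq; intros; lia.
Qed.

Lemma CSeries_PS_even u y : entire (PS_even u) ->
  CSeries (fun n => RtoC (u n) * y ^ (2 * n))%C = CPSeries (PS_even u) y.
Proof.
  intros Hu; unfold CPSeries, CSeries; f_equal.
  - rewrite <- (Series_double (fun k => fst (CPS_term (PS_even u) y k))).
    + apply Series_ext; intros m; unfold CPS_term; now rewrite PS_even_double.
    + now apply ex_series_fst_CPS_term.
    + intros m; rewrite fst_CPS_term, PS_even_succ_double; ring.
  - rewrite <- (Series_double (fun k => snd (CPS_term (PS_even u) y k))).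
    + apply Series_ext; intros m; unfold CPS_term; now rewrite PS_even_double.
    + now apply ex_series_snd_CPS_term.
    + intros m; rewrite snd_CPS_term, PS_even_succ_double; ring.
Qed.

Lemma CSeries_PS_odd u y : entire (PS_odd u) ->
  CSeries (fun n => RtoC (u n) * y ^ (2 * n + 1))%C = CPSeries (PS_odd u) y.
Proof.
  intros Hu; unfold CPSeries, CSeries; f_equal.
  - rewrite <- (Series_succ_double (fun k => fst (CPS_term (PS_odd u) y k))).
    + apply Series_ext; intros m; unfold CPS_term; now rewrite PS_odd_succ_double, Nat.add_1_r.
    + now apply ex_series_fst_CPS_term.
    + intros m; rewrite fst_CPS_term, PS_odd_double; ring.
  - rewrite <- (Series_succ_double (fun k => snd (CPS_term (PS_odd u) y k))).
    + apply Series_ext; intros m; unfold CPS_term; now rewrite PS_odd_succ_double, Nat.add_1_r.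
    + now apply ex_series_snd_CPS_term.
    + intros m; rewrite snd_CPS_term, PS_odd_double; ring.
Qed.

(** * The Bessel and Struve series *)

(* Coefficients of [I0], [I1], [J] (the odd series of the theorem), [L0], [L1] and [exp], the
   powers of [1/2] in the Bessel and Struve series being absorbed into the coefficients. *)
Definition i0_coef (m : nat) : R := / (4 ^ m * INR (fact m) ^ 2).
Definition i1_coef (m : nat) : R := / (2 * 4 ^ m * (INR (fact m) * INR (fact (S m)))).
Definition j_coef (m : nat) : R := / (4 ^ m * INR (fact m) ^ 2 * INR (2 * m + 1)).
Definition l0_coef (m : nat) : R := / (2 * 4 ^ m * Gamma_half (S m) ^ 2).
Definition l1_coef (m : nat) : R := / (4 * 4 ^ m * (Gamma_half (S m) * Gamma_half (S (S m)))).

Definition i0_ps : nat -> R := PS_even i0_coef.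
Definition i1_ps : nat -> R := PS_odd i1_coef.
Definition j_ps : nat -> R := PS_odd j_coef.
Definition l0_ps : nat -> R := PS_odd l0_coef.
Definition l1_ps : nat -> R := PS_incr_1 (PS_odd l1_coef).
Definition exp_ps (k : nat) : R := / INR (fact k).

Lemma Gamma_half_pos m : 0 < Gamma_half m.
Proof.
  unfold Gamma_half; apply Rmult_lt_0_compat; [apply Rmult_lt_0_compat|].
  - apply INR_fact_lt_0.
  - apply sqrt_lt_R0, PI_RGT_0.
  - apply Rinv_0_lt_compat, Rmult_lt_0_compat; [apply pow_lt; lra | apply INR_fact_lt_0].
Qed.

Lemma Gamma_half_S m : Gamma_half (S m) = (2 * INR m + 1) / 2 * Gamma_half m.
Proof.
  unfold Gamma_half; replace (2 * S m)%nat with (S (S (2 * m))) by lia.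
  rewrite !fact_simpl, !mult_INR, !S_INR, !mult_INR; simpl pow.
  assert (H1 := INR_fact_neq_0 m); assert (H2 := INR_fact_neq_0 (2 * m)).
  assert (H3 : 4 ^ m <> 0) by (apply pow_nonzero; lra); assert (H4 := pos_INR m).
  simpl INR; field; repeat split; auto; lra.
Qed.

Lemma Gamma_half_1 : Gamma_half 1 = sqrt PI / 2.
Proof. unfold Gamma_half; simpl; field. Qed.

Ltac expand_fact_INR :=
  rewrite ?fact_simpl, ?mult_INR, ?S_INR, ?plus_INR, ?mult_INR, ?S_INR, ?INR_0 in *.
Ltac pose_fact_pos m :=
  assert (0 < INR (fact m)) by apply INR_fact_lt_0;
  assert (0 < 4 ^ m) by (apply pow_lt; lra);
  assert (0 <= INR m) by apply pos_INR.
Ltac solve_nonzero := repeat split; try (intro; nra); try (apply pow_nonzero; lra).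

Lemma double_S m : S (S (2 * m)) = (2 * S m)%nat.
Proof. lia. Qed.

Lemma PS_derive_i0 : PS_derive i0_ps = i1_ps.
Proof.
  apply functional_extensionality; intros n; unfold PS_derive, i0_ps, i1_ps.
  destruct (even_or_succ_double n) as [m [-> | ->]].
  - now rewrite PS_even_succ_double, PS_odd_double, Rmult_0_r.
  - rewrite double_S, PS_even_double, PS_odd_succ_double.
    unfold i0_coef, i1_coef; simpl pow; pose_fact_pos m; expand_fact_INR.
    field; solve_nonzero.
Qed.

Lemma PS_derive_j : PS_derive j_ps = i0_ps.
Proof.
  apply functional_extensionality; intros n; unfold PS_derive, i0_ps, j_ps.
  destruct (even_or_succ_double n) as [m [-> | ->]].
  - rewrite PS_even_double, PS_odd_succ_double; unfold i0_coef, j_coef.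
    pose_fact_pos m; expand_fact_INR; field; solve_nonzero.
  - now rewrite double_S, PS_even_succ_double, PS_odd_double, Rmult_0_r.
Qed.

Lemma PS_derive_exp : PS_derive exp_ps = exp_ps.
Proof.
  apply functional_extensionality; intros n; unfold PS_derive, exp_ps.
  pose_fact_pos n; expand_fact_INR; field; solve_nonzero.
Qed.

Lemma PS_derive_incr_1_l1 : PS_derive (PS_incr_1 l1_ps) = PS_incr_1 l0_ps.
Proof.
  apply functional_extensionality; intros [|k]; unfold PS_derive.
  - simpl; unfold zero, PS_odd; simpl; ring.
  - change (PS_incr_1 l1_ps (S (S k))) with (PS_odd l1_coef k).
    change (PS_incr_1 l0_ps (S k)) with (PS_odd l0_coef k).
    destruct (even_or_succ_double k) as [m [-> | ->]].
    + now rewrite !PS_odd_double, Rmult_0_r.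
    + rewrite !PS_odd_succ_double; unfold l0_coef, l1_coef.
      rewrite (Gamma_half_S (S m)); assert (G := Gamma_half_pos (S m)).
      pose_fact_pos m; expand_fact_INR; field; solve_nonzero.
Qed.

Lemma PS_derive_l0 : PS_derive l0_ps = PS_lin (2 / PI) PS_one 1 l1_ps.
Proof.
  assert (HPI := PI_RGT_0).
  apply functional_extensionality; intros n; unfold PS_derive, PS_lin, l0_ps, l1_ps.
  destruct (even_or_succ_double n) as [m [-> | ->]].
  - rewrite PS_odd_succ_double; destruct m as [|m].
    + simpl; unfold PS_odd, zero, l0_coef; simpl; rewrite Gamma_half_1.
      assert (Hsqrt : sqrt PI * sqrt PI = PI) by (apply sqrt_sqrt; lra).
      replace (sqrt PI / 2 * (sqrt PI / 2 * 1)) with (PI / 4)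
        by (rewrite <- Hsqrt at 1; field).
      field; lra.
    + rewrite <- double_S; change (PS_one (S (S (2 * m)))) with 0.
      change (PS_incr_1 (PS_odd l1_coef) (S (S (2 * m)))) with (PS_odd l1_coef (S (2 * m))).
      rewrite PS_odd_succ_double; unfold l0_coef, l1_coef.
      rewrite (Gamma_half_S (S m)); assert (G := Gamma_half_pos (S m)).
      pose_fact_pos m; expand_fact_INR; simpl pow; field; solve_nonzero.
  - rewrite double_S, PS_odd_double; change (PS_one (S (2 * m))) with 0.
    change (PS_incr_1 (PS_odd l1_coef) (S (2 * m))) with (PS_odd l1_coef (2 * m)).
    rewrite PS_odd_double; ring.
Qed.

Lemma PS_derive_incr_1_i1 : PS_derive (PS_incr_1 i1_ps) = PS_incr_1 i0_ps.
Proof.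
  apply functional_extensionality; intros n; unfold PS_derive.
  change (PS_incr_1 i1_ps (S n)) with (i1_ps n); unfold i0_ps, i1_ps.
  destruct (even_or_succ_double n) as [m [-> | ->]].
  - rewrite PS_odd_double; destruct m as [|m]; [simpl; unfold zero; simpl; ring|].
    rewrite <- double_S; change (PS_incr_1 (PS_even i0_coef) (S (S (2 * m))))
      with (PS_even i0_coef (S (2 * m))).
    rewrite PS_even_succ_double; ring.
  - rewrite PS_odd_succ_double; change (PS_incr_1 (PS_even i0_coef) (S (2 * m)))
      with (PS_even i0_coef (2 * m)).
    rewrite PS_even_double; unfold i0_coef, i1_coef.
    pose_fact_pos m; expand_fact_INR; field; solve_nonzero.
Qed.

Lemma le_div_fact_of_ratio s (u : nat -> R) : (forall n, 0 <= u n) ->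
  (forall n, u (S n) * (INR (2 * n + s + 1) * INR (2 * n + s + 2)) <= u n) ->
  forall n, u n <= u 0%nat * INR (fact s) / INR (fact (2 * n + s)).
Proof.
  intros Hpos Hratio n; induction n as [|n IH].
  - simpl; right; field; apply INR_fact_neq_0.
  - replace (fact (2 * S n + s))
      with ((2 * n + s + 2) * ((2 * n + s + 1) * fact (2 * n + s)))%nat
      by (replace (2 * S n + s)%nat with (S (S (2 * n + s))) by lia;
          rewrite !fact_simpl; f_equal; lia).
    rewrite !mult_INR.
    assert (H1 : 0 < INR (2 * n + s + 1)) by (apply lt_0_INR; lia).
    assert (H2 : 0 < INR (2 * n + s + 2)) by (apply lt_0_INR; lia).
    assert (H3 := INR_fact_lt_0 (2 * n + s)).
    apply Rmult_le_reg_r with (INR (2 * n + s + 1) * INR (2 * n + s + 2)); [nra|].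
    eapply Rle_trans; [apply Hratio | eapply Rle_trans; [apply IH | right; field; lra]].
Qed.

Lemma entire_PS_even u : (forall n, 0 <= u n) ->
  (forall n, u (S n) * (INR (2 * n + 0 + 1) * INR (2 * n + 0 + 2)) <= u n) ->
  entire (PS_even u).
Proof.
  intros Hpos Hratio; apply (entire_exp_bound _ (u 0%nat) 1); [lra|]; intros k.
  rewrite pow1; destruct (even_or_succ_double k) as [m [-> | ->]].
  - rewrite PS_even_double, Rabs_pos_eq by auto.
    eapply Rle_trans; [apply (le_div_fact_of_ratio 0 u Hpos Hratio m)|].
    rewrite Nat.add_0_r; change (INR (fact 0)) with 1; right; reflexivity.
  - rewrite PS_even_succ_double, Rabs_R0.
    apply Rmult_le_pos; [rewrite Rmult_1_r; auto | apply Rlt_le, Rinv_0_lt_compat, INR_fact_lt_0].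
Qed.

Lemma entire_PS_odd u : (forall n, 0 <= u n) ->
  (forall n, u (S n) * (INR (2 * n + 1 + 1) * INR (2 * n + 1 + 2)) <= u n) ->
  entire (PS_odd u).
Proof.
  intros Hpos Hratio; apply (entire_exp_bound _ (u 0%nat) 1); [lra|]; intros k.
  rewrite pow1; destruct (even_or_succ_double k) as [m [-> | ->]].
  - rewrite PS_odd_double, Rabs_R0.
    apply Rmult_le_pos; [rewrite Rmult_1_r; auto | apply Rlt_le, Rinv_0_lt_compat, INR_fact_lt_0].
  - rewrite PS_odd_succ_double, Rabs_pos_eq by auto.
    eapply Rle_trans; [apply (le_div_fact_of_ratio 1 u Hpos Hratio m)|].
    rewrite Nat.add_1_r; change (INR (fact 1)) with 1; right; reflexivity.
Qed.

Lemma div_mult_le x k P : 0 <= x -> 0 < k -> P <= k -> x / k * P <= x.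
Proof.
  intros Hx Hk HP; replace (x / k * P) with (x * (P / k)) by (field; lra).
  rewrite <- (Rmult_1_r x) at 2; apply Rmult_le_compat_l; [easy|].
  apply (Rmult_le_reg_r k); [easy|]; unfold Rdiv; rewrite Rmult_assoc, Rinv_l; lra.
Qed.

Lemma i0_coef_S n : i0_coef (S n) = i0_coef n / (4 * (INR n + 1) ^ 2).
Proof. unfold i0_coef; pose_fact_pos n; expand_fact_INR; simpl pow; field; solve_nonzero. Qed.

Lemma i1_coef_S n : i1_coef (S n) = i1_coef n / (4 * (INR n + 1) * (INR n + 2)).
Proof. unfold i1_coef; pose_fact_pos n; expand_fact_INR; simpl pow; field; solve_nonzero. Qed.

Lemma j_coef_S n :
  j_coef (S n) = j_coef n / (4 * (INR n + 1) ^ 2 * (2 * INR n + 3) / (2 * INR n + 1)).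
Proof.
  unfold j_coef; replace (2 * S n + 1)%nat with (S (S (2 * n + 1))) by lia.
  pose_fact_pos n; expand_fact_INR; simpl pow; field; solve_nonzero.
Qed.

Lemma l0_coef_S n : l0_coef (S n) = l0_coef n / (2 * INR n + 3) ^ 2.
Proof.
  unfold l0_coef; rewrite (Gamma_half_S (S n)); assert (G := Gamma_half_pos (S n)).
  pose_fact_pos n; expand_fact_INR; simpl pow; field; solve_nonzero.
Qed.

Lemma l1_coef_S n : l1_coef (S n) = l1_coef n / ((2 * INR n + 3) * (2 * INR n + 5)).
Proof.
  unfold l1_coef; rewrite (Gamma_half_S (S (S n))), (Gamma_half_S (S n)).
  assert (G := Gamma_half_pos (S n)); pose_fact_pos n; expand_fact_INR; simpl pow.
  field; solve_nonzero.
Qed.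

Lemma i0_coef_pos n : 0 <= i0_coef n.
Proof.
  unfold i0_coef; pose_fact_pos n; apply Rlt_le, Rinv_0_lt_compat.
  apply Rmult_lt_0_compat; [easy | now apply pow_lt].
Qed.

Lemma i1_coef_pos n : 0 <= i1_coef n.
Proof.
  unfold i1_coef; pose_fact_pos n; assert (Hfact := INR_fact_lt_0 (S n)).
  apply Rlt_le, Rinv_0_lt_compat, Rmult_lt_0_compat; [lra | nra].
Qed.

Lemma j_coef_pos n : 0 <= j_coef n.
Proof.
  unfold j_coef; pose_fact_pos n; apply Rlt_le, Rinv_0_lt_compat, Rmult_lt_0_compat.
  - apply Rmult_lt_0_compat; [easy | now apply pow_lt].
  - apply lt_0_INR; lia.
Qed.

Lemma l0_coef_pos n : 0 <= l0_coef n.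
Proof.
  unfold l0_coef; pose_fact_pos n; assert (G := Gamma_half_pos (S n)).
  apply Rlt_le, Rinv_0_lt_compat, Rmult_lt_0_compat; [lra | now apply pow_lt].
Qed.

Lemma l1_coef_pos n : 0 <= l1_coef n.
Proof.
  unfold l1_coef; pose_fact_pos n.
  assert (G := Gamma_half_pos (S n)); assert (G' := Gamma_half_pos (S (S n))).
  apply Rlt_le, Rinv_0_lt_compat, Rmult_lt_0_compat; [lra | nra].
Qed.

Lemma entire_i0 : entire i0_ps.
Proof.
  apply entire_PS_even; [apply i0_coef_pos|]; intros n; rewrite i0_coef_S.
  pose_fact_pos n; apply div_mult_le; [apply i0_coef_pos | nra | expand_fact_INR; nra].
Qed.

Lemma entire_i1 : entire i1_ps.
Proof.
  apply entire_PS_odd; [apply i1_coef_pos|]; intros n; rewrite i1_coef_S.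
  pose_fact_pos n; apply div_mult_le; [apply i1_coef_pos | nra | expand_fact_INR; nra].
Qed.

Lemma entire_j : entire j_ps.
Proof.
  apply entire_PS_odd; [apply j_coef_pos|]; intros n; rewrite j_coef_S.
  pose_fact_pos n; apply div_mult_le; [apply j_coef_pos | |].
  - apply Rdiv_lt_0_compat; nra.
  - expand_fact_INR; apply (Rmult_le_reg_r (2 * INR n + 1)); [lra|].
    replace (4 * (INR n + 1) ^ 2 * (2 * INR n + 3) / (2 * INR n + 1) * (2 * INR n + 1))
      with (4 * (INR n + 1) ^ 2 * (2 * INR n + 3)) by (field; lra).
    nra.
Qed.

Lemma entire_l0 : entire l0_ps.
Proof.
  apply entire_PS_odd; [apply l0_coef_pos|]; intros n; rewrite l0_coef_S.
  pose_fact_pos n; apply div_mult_le; [apply l0_coef_pos | nra | expand_fact_INR; nra].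
Qed.

Lemma entire_l1 : entire l1_ps.
Proof.
  apply entire_incr_1, entire_PS_odd; [apply l1_coef_pos|]; intros n; rewrite l1_coef_S.
  pose_fact_pos n; apply div_mult_le; [apply l1_coef_pos | nra | expand_fact_INR; nra].
Qed.

Lemma entire_exp : entire exp_ps.
Proof.
  apply (entire_exp_bound _ 1 1); [lra|]; intros k; unfold exp_ps.
  rewrite pow1, Rabs_pos_eq by apply Rlt_le, Rinv_0_lt_compat, INR_fact_lt_0.
  right; field; apply INR_fact_neq_0.
Qed.

Lemma Cdiv_RtoC (z : C) r : r <> 0 -> (z / RtoC r = RtoC (/ r) * z)%C.
Proof.
  intros Hr; destruct z as [u v]; unfold Cdiv, Cinv, Cmult, RtoC; simpl; f_equal; field; auto.
Qed.

Lemma Cpow_half (y : C) m : ((y / RtoC 2) ^ m = RtoC ((/ 2) ^ m) * y ^ m)%C.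
Proof. rewrite Cdiv_RtoC, Cpow_mult_l, <- RtoC_pow by lra; ring. Qed.

Lemma half_pow_succ_double n : (/ 2) ^ (2 * n + 1) = / (2 * 4 ^ n).
Proof.
  induction n as [|n IH]; [simpl; field|].
  replace (2 * S n + 1)%nat with (S (S (2 * n + 1))) by lia; simpl pow; simpl pow in IH.
  rewrite IH; field; apply pow_nonzero; lra.
Qed.

Lemma Cexp_CPSeries y : Cexp y = CPSeries exp_ps y.
Proof.
  apply CSeries_ext; intros k; unfold CPS_term, exp_ps; apply Cdiv_RtoC, INR_fact_neq_0.
Qed.

Lemma BesselI0_CPSeries y : BesselI0 y = CPSeries i0_ps y.
Proof.
  unfold BesselI0, i0_ps; rewrite <- CSeries_PS_even by apply entire_i0.
  apply CSeries_ext; intros n; unfold i0_coef; apply Cdiv_RtoC, Rgt_not_eq.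
  pose_fact_pos n; apply Rmult_lt_0_compat; [easy | now apply pow_lt].
Qed.

Lemma J_CPSeries y : CSeries (fun n => y ^ (2 * n + 1) /
    RtoC (4 ^ n * (INR (fact n)) ^ 2 * INR (2 * n + 1))%R)%C = CPSeries j_ps y.
Proof.
  unfold j_ps; rewrite <- CSeries_PS_odd by apply entire_j.
  apply CSeries_ext; intros n; unfold j_coef; apply Cdiv_RtoC, Rgt_not_eq.
  pose_fact_pos n; apply Rmult_lt_0_compat; [apply Rmult_lt_0_compat; [easy | now apply pow_lt]|].
  apply lt_0_INR; lia.
Qed.

Lemma BesselI1_CPSeries y : BesselI1 y = CPSeries i1_ps y.
Proof.
  unfold BesselI1, i1_ps; rewrite <- CSeries_PS_odd by apply entire_i1.
  apply CSeries_ext; intros n; rewrite Cpow_half, half_pow_succ_double.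
  replace (n + 1)%nat with (S n) by lia.
  assert (P : 0 < INR (fact n) * INR (fact (S n)))
    by (apply Rmult_lt_0_compat; apply INR_fact_lt_0).
  rewrite Cdiv_RtoC, Cmult_assoc, <- RtoC_mult by lra; unfold i1_coef; do 2 f_equal.
  pose_fact_pos n; field; solve_nonzero.
Qed.

Lemma StruveL0_CPSeries y : StruveL0 y = CPSeries l0_ps y.
Proof.
  unfold StruveL0, l0_ps; rewrite <- CSeries_PS_odd by apply entire_l0.
  apply CSeries_ext; intros n; rewrite Cpow_half, half_pow_succ_double.
  replace (n + 1)%nat with (S n) by lia.
  assert (G := Gamma_half_pos (S n)).
  rewrite Cdiv_RtoC, Cmult_assoc, <- RtoC_mult by (apply pow_nonzero; lra).
  unfold l0_coef; do 2 f_equal; pose_fact_pos n; field; solve_nonzero.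
Qed.

Lemma l1_ps_PS_even : l1_ps = PS_even (PS_incr_1 l1_coef).
Proof.
  apply functional_extensionality; intros n; unfold l1_ps.
  destruct (even_or_succ_double n) as [m [-> | ->]].
  - rewrite PS_even_double; destruct m as [|m]; [easy|].
    rewrite <- double_S; change (PS_incr_1 ?u (S ?k)) with (u k); apply PS_odd_succ_double.
  - rewrite PS_even_succ_double; change (PS_incr_1 ?u (S ?k)) with (u k); apply PS_odd_double.
Qed.

Lemma StruveL1_CPSeries y : StruveL1 y = CPSeries l1_ps y.
Proof.
  assert (Hentire : entire (PS_even (PS_incr_1 l1_coef)))
    by (rewrite <- l1_ps_PS_even; apply entire_l1).
  rewrite l1_ps_PS_even, <- CSeries_PS_even, CSeries_incr_1
    by (auto; rewrite PS_incr_1_O; ring).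
  apply CSeries_ext; intros n; rewrite Cpow_half.
  replace (2 * n + 2)%nat with (S (2 * n + 1)) by lia.
  rewrite <- tech_pow_Rmult, half_pow_succ_double.
  replace (n + 1)%nat with (S n) by lia; replace (n + 2)%nat with (S (S n)) by lia.
  assert (G := Gamma_half_pos (S n)); assert (G' := Gamma_half_pos (S (S n))).
  rewrite Cdiv_RtoC, Cmult_assoc, <- RtoC_mult by (apply Rgt_not_eq; nra).
  replace (2 * S n)%nat with (S (2 * n + 1)) by lia.
  unfold l1_coef; simpl PS_incr_1; do 2 f_equal; pose_fact_pos n; field; solve_nonzero.
Qed.

(** * The Struve identity *)

Definition struve_ps : nat -> R :=
  PS_lin 1 (PS_incr_1 (PS_mult i0_ps l1_ps)) (-1) (PS_incr_1 (PS_mult i1_ps l0_ps)).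

Lemma PS_derive_struve n : PS_derive struve_ps n = - (2 / PI) * PS_incr_1 i1_ps n.
Proof.
  unfold struve_ps; rewrite PS_derive_lin, <- PS_mult_incr_1_r, <- PS_mult_incr_1_l.
  rewrite !PS_derive_mult, PS_derive_i0, PS_derive_incr_1_l1, PS_derive_incr_1_i1, PS_derive_l0.
  rewrite PS_mult_lin_r, PS_mult_one_r, !PS_mult_incr_1_r, !PS_mult_incr_1_l.
  unfold PS_lin; ring.
Qed.

(* [J = y I0 + (pi/2) y (I0 L1 - I1 L0)]: both sides vanish at 0 and have derivative [I0]. *)
Lemma j_ps_eq : j_ps = PS_lin 1 (PS_incr_1 i0_ps) (PI / 2) struve_ps.
Proof.
  assert (Hdiff : PS_lin 1 j_ps (-1) (PS_lin 1 (PS_incr_1 i0_ps) (PI / 2) struve_ps) = PS_zero).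
  { apply PS_derive_eq_zero.
    - rewrite !PS_derive_lin, PS_derive_incr_1, PS_derive_i0, PS_derive_j.
      apply functional_extensionality; intros n; unfold PS_lin, PS_zero.
      rewrite PS_derive_struve; field; apply Rgt_not_eq, PI_RGT_0.
    - unfold struve_ps; unfold PS_lin; rewrite !PS_incr_1_O; unfold j_ps, PS_odd; simpl; ring. }
  apply functional_extensionality; intros n.
  assert (E := f_equal (fun u => u n) Hdiff); unfold PS_lin, PS_zero in E |- *; lra.
Qed.

Lemma CPSeries_j_struve y : CPSeries j_ps y =
  (y * CPSeries i0_ps y
   + RtoC (PI / 2) * (y * (CPSeries i0_ps y * CPSeries l1_ps y)
                      - y * (CPSeries i1_ps y * CPSeries l0_ps y)))%C.
Proof.
  rewrite j_ps_eq at 1; unfold struve_ps.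
  rewrite !CPSeries_lin, !CPSeries_incr_1, !CPSeries_mult
    by auto using entire_lin, entire_incr_1, entire_mult,
                  entire_i0, entire_i1, entire_l0, entire_l1.
  apply injective_projections; simpl; ring.
Qed.

(** * The Catalan identity *)

Lemma Catalan_S n : Catalan (S n) = 2 * (2 * INR n + 1) / (INR n + 2) * Catalan n.
Proof.
  unfold Catalan, Binomial.C.
  replace (2 * S n - S n)%nat with (S n) by lia; replace (2 * n - n)%nat with n by lia.
  replace (2 * S n)%nat with (S (S (2 * n))) by lia.
  replace (S n + 1)%nat with (S (S n)) by lia; replace (n + 1)%nat with (S n) by lia.
  assert (H2 := INR_fact_lt_0 (2 * n)); pose_fact_pos n; expand_fact_INR.
  field; solve_nonzero.
Qed.

Definition catalan_egf (k : nat) : R := Catalan k / 2 ^ k / INR (fact k).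

Definition catalan_op (f : nat -> R) : nat -> R :=
  PS_lin 1 (PS_lin 1 (PS_incr_1 (PS_derive (PS_derive f))) 2 (PS_derive f))
    (-1) (PS_lin 2 (PS_incr_1 (PS_derive f)) 1 f).

(* [e^(-y) catalan_op (e^y q) = y q'' + 2 q' + q - y q] *)
Definition bessel_op (q : nat -> R) : nat -> R :=
  PS_lin 1 (PS_lin 1 (PS_incr_1 (PS_derive (PS_derive q))) 2 (PS_derive q))
    1 (PS_lin 1 q (-1) (PS_incr_1 q)).

Lemma catalan_op_coef f n :
  catalan_op f n = INR (S n) * INR (S (S n)) * f (S n) - (2 * INR n + 1) * f n.
Proof.
  destruct n as [|n]; unfold catalan_op, PS_lin, PS_derive; simpl; unfold zero;
    rewrite ?S_INR; simpl; ring.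
Qed.

Lemma bessel_op_coef q n :
  bessel_op q n = INR (S n) * INR (S (S n)) * q (S n) + q n - PS_incr_1 q n.
Proof.
  destruct n as [|n]; unfold bessel_op, PS_lin, PS_derive; simpl; unfold zero;
    rewrite ?S_INR; simpl; ring.
Qed.

Lemma PS_derive_mult_exp r :
  PS_derive (PS_mult exp_ps r) = PS_mult exp_ps (PS_lin 1 r 1 (PS_derive r)).
Proof. now rewrite PS_derive_mult, PS_derive_exp, PS_mult_lin_r. Qed.

Lemma catalan_op_mult_exp r : catalan_op (PS_mult exp_ps r) = PS_mult exp_ps (bessel_op r).
Proof.
  unfold catalan_op; rewrite !PS_derive_mult_exp, <- !PS_mult_incr_1_r, <- !PS_mult_lin_r.
  f_equal; unfold bessel_op; rewrite !PS_derive_lin, !PS_incr_1_lin.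
  apply functional_extensionality; intros n; unfold PS_lin; ring.
Qed.

Lemma catalan_op_unique f g :
  catalan_op f = PS_zero -> catalan_op g = PS_zero -> f 0%nat = g 0%nat -> f = g.
Proof.
  intros Hf Hg H0; apply functional_extensionality; intros n.
  induction n as [|n IH]; [easy|].
  assert (Ef := f_equal (fun u => u n) Hf); assert (Eg := f_equal (fun u => u n) Hg).
  simpl in Ef, Eg; rewrite catalan_op_coef in Ef, Eg; unfold PS_zero in Ef, Eg.
  assert (P : 0 < INR (S n) * INR (S (S n))) by (apply Rmult_lt_0_compat; apply lt_0_INR; lia).
  apply (Rmult_eq_reg_l (INR (S n) * INR (S (S n)))); [rewrite IH in Ef; lra | lra].
Qed.

Lemma catalan_op_egf : catalan_op catalan_egf = PS_zero.
Proof.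
  apply functional_extensionality; intros n; rewrite catalan_op_coef; unfold PS_zero, catalan_egf.
  rewrite Catalan_S; pose_fact_pos n; expand_fact_INR; simpl pow; field; solve_nonzero.
Qed.

Lemma bessel_op_i0_i1 : bessel_op (PS_lin 1 i0_ps (-1) i1_ps) = PS_zero.
Proof.
  apply functional_extensionality; intros n; rewrite bessel_op_coef.
  unfold PS_zero, PS_lin, i0_ps, i1_ps.
  destruct (even_or_succ_double n) as [m [-> | ->]].
  - rewrite PS_even_succ_double, PS_odd_succ_double, PS_even_double, PS_odd_double.
    destruct m as [|m].
    + unfold i0_coef, i1_coef; simpl; unfold zero; simpl; field.
    + rewrite <- double_S.
      change (PS_incr_1 ?u (S (S (2 * m)))) with (u (S (2 * m))); cbv beta.
      rewrite PS_even_succ_double, PS_odd_succ_double.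
      unfold i0_coef, i1_coef; pose_fact_pos m; expand_fact_INR; simpl pow.
      field; solve_nonzero.
  - rewrite double_S, PS_even_double, PS_odd_double, PS_even_succ_double, PS_odd_succ_double.
    change (PS_incr_1 ?u (S (2 * m))) with (u (2 * m)%nat); cbv beta.
    rewrite PS_even_double, PS_odd_double.
    unfold i0_coef, i1_coef; pose_fact_pos m; expand_fact_INR; simpl pow.
    field; solve_nonzero.
Qed.

Lemma mult_exp_i0_i1 : PS_mult exp_ps (PS_lin 1 i0_ps (-1) i1_ps) = catalan_egf.
Proof.
  apply catalan_op_unique.
  - now rewrite catalan_op_mult_exp, bessel_op_i0_i1, PS_mult_zero_r.
  - apply catalan_op_egf.
  - unfold PS_mult, exp_ps, catalan_egf, PS_lin, i0_ps, i1_ps, PS_even, PS_odd, i0_coef.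
    unfold Catalan, Binomial.C; simpl; field.
Qed.

Fixpoint catalan_partial (k : nat) : R :=
  match k with O => 0 | S k => catalan_partial k + Catalan k / 2 ^ k end.

Definition h_ps (k : nat) : R := catalan_partial k / INR (fact k).

Definition g_ps : nat -> R := PS_lin 1 (PS_lin 1 PS_one (-1) i0_ps) 1 j_ps.

Lemma PS_derive_h : PS_derive h_ps = PS_lin 1 h_ps 1 catalan_egf.
Proof.
  apply functional_extensionality; intros n; unfold PS_derive, PS_lin, h_ps, catalan_egf.
  simpl catalan_partial; pose_fact_pos n; expand_fact_INR; field; solve_nonzero.
Qed.

Lemma PS_derive_g : PS_derive g_ps = PS_lin 1 i0_ps (-1) i1_ps.
Proof.
  unfold g_ps; rewrite !PS_derive_lin, PS_derive_one, PS_derive_i0, PS_derive_j.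
  apply functional_extensionality; intros n; unfold PS_lin, PS_zero; ring.
Qed.

(* [H = e^y (1 - I0 + J)]: both satisfy [F' = F + catalan_egf] and [F(0) = 0]. *)
Lemma h_ps_eq : h_ps = PS_mult exp_ps g_ps.
Proof.
  assert (Hdiff : PS_lin 1 h_ps (-1) (PS_mult exp_ps g_ps) = PS_zero).
  { apply PS_derive_eq_self.
    - rewrite PS_derive_lin, PS_derive_h, PS_derive_mult_exp, PS_mult_lin_r, PS_derive_g.
      rewrite mult_exp_i0_i1; apply functional_extensionality; intros n; unfold PS_lin; ring.
    - unfold PS_lin, h_ps, PS_mult, exp_ps, g_ps, PS_lin, PS_one, i0_ps, j_ps, PS_even, PS_odd.
      unfold i0_coef; simpl; field. }
  apply functional_extensionality; intros n.
  assert (E := f_equal (fun u => u n) Hdiff); unfold PS_lin, PS_zero in E; lra.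
Qed.

Lemma entire_g : entire g_ps.
Proof. unfold g_ps; auto using entire_lin, entire_one, entire_i0, entire_j. Qed.

Lemma CPSeries_g y :
  CPSeries g_ps y = (1 - BesselI0 y + CSeries (fun n => y ^ (2 * n + 1) /
                       RtoC (4 ^ n * (INR (fact n)) ^ 2 * INR (2 * n + 1))%R))%C.
Proof.
  rewrite J_CPSeries, BesselI0_CPSeries; unfold g_ps.
  rewrite !CPSeries_lin, CPSeries_one by auto using entire_lin, entire_one, entire_i0, entire_j.
  apply injective_projections; simpl; ring.
Qed.

(** * Summation of the remainder series *)

Lemma Catalan_div_pow_bound k : 0 <= Catalan k / 2 ^ k <= 2 ^ k.
Proof.
  induction k as [|k [IH0 IH1]].
  - unfold Catalan, Binomial.C; simpl; split; [|right]; field_simplify; lra.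
  - pose_fact_pos k.
    assert (Hratio : 0 <= (2 * INR k + 1) / (INR k + 2) <= 2).
    { split; [apply Rdiv_le_0_compat; lra|].
      apply (Rmult_le_reg_r (INR k + 2)); [lra|].
      unfold Rdiv; rewrite Rmult_assoc, Rinv_l; lra. }
    replace (Catalan (S k) / 2 ^ S k) with (Catalan k / 2 ^ k * ((2 * INR k + 1) / (INR k + 2)))
      by (rewrite Catalan_S; simpl pow; field; split; [lra | apply pow_nonzero; lra]).
    simpl pow; split; nra.
Qed.

Lemma catalan_partial_bound n : 0 <= catalan_partial n <= 2 ^ n.
Proof.
  induction n as [|n IH]; simpl; [lra|].
  destruct (Catalan_div_pow_bound n); lra.
Qed.

Lemma entire_h : entire h_ps.
Proof.
  apply (entire_exp_bound _ 1 2); [lra|]; intros k; unfold h_ps.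
  destruct (catalan_partial_bound k); assert (Hfact := INR_fact_lt_0 k).
  rewrite Rabs_pos_eq by (apply Rdiv_le_0_compat; lra).
  unfold Rdiv; rewrite Rmult_1_l; apply Rmult_le_compat_r; [|easy].
  apply Rlt_le, Rinv_0_lt_compat, Hfact.
Qed.

Definition exp_tail (r : R) (N : nat) : R :=
  Series (fun k => r ^ (S N + k) / INR (fact (S N + k))).

Lemma Rabs_Series_minus_sum_le_exp_tail (f : nat -> R) r N : 0 <= r ->
  (forall k, Rabs (f k) <= r ^ k / INR (fact k)) ->
  Rabs (Series f - sum_n f N) <= exp_tail r N.
Proof.
  intros Hr Hf.
  assert (Hexp := ex_series_exp r).
  assert (Htail : ex_series (fun k => r ^ (S N + k) / INR (fact (S N + k))))
    by apply (ex_series_incr_n (fun k => r ^ k / INR (fact k)) (S N)), Hexp.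
  assert (Hex : ex_series f) by apply (@ex_series_le R_AbsRing R_CompleteNormedModule _ _ Hf Hexp).
  rewrite (Series_incr_n f (S N)) by (auto; lia); simpl pred; rewrite sum_n_Reals.
  replace (sum_f_R0 f N + Series (fun k => f (S N + k)%nat) - sum_f_R0 f N)
    with (Series (fun k => f (S N + k)%nat)) by ring.
  eapply Rle_trans; [apply Series_Rabs|].
  - apply (@ex_series_le R_AbsRing R_CompleteNormedModule _
             (fun k => r ^ (S N + k) / INR (fact (S N + k)))); [|exact Htail].
    intros k; change norm with Rabs; simpl; rewrite Rabs_Rabsolu; apply Hf.
  - apply Series_le; [intros k; split; [apply Rabs_pos | apply Hf] | exact Htail].
Qed.

Lemma is_lim_seq_exp_tail r : is_lim_seq (exp_tail r) 0.
Proof.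
  set (a := fun k => r ^ k / INR (fact k)); assert (Ha : ex_series a) by apply ex_series_exp.
  apply is_lim_seq_ext with (fun N => Series a - sum_f_R0 a N).
  - intros N; unfold exp_tail; rewrite (Series_incr_n a (S N)) by (auto; lia).
    simpl pred; unfold a; ring.
  - replace 0 with (Series a - Series a) by ring.
    apply is_lim_seq_minus'; [apply is_lim_seq_const|].
    eapply is_lim_seq_ext; [intros n; apply sum_n_Reals | apply (Series_correct a Ha)].
Qed.

Lemma pow_mult_exp_tail_le r N : 0 <= r -> 2 ^ S N * exp_tail r N <= exp_tail (2 * r) N.
Proof.
  intros Hr; unfold exp_tail; rewrite <- Series_scal_l; apply Series_le.
  - intros k; assert (F := INR_fact_lt_0 (S N + k)).
    assert (Hinv : 0 <= / INR (fact (S N + k))) by (apply Rlt_le, Rinv_0_lt_compat; lra).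
    split.
    + apply Rmult_le_pos; [apply pow_le; lra|].
      apply Rmult_le_pos; [apply pow_le; lra | easy].
    + rewrite Rpow_mult_distr; unfold Rdiv; rewrite <- !Rmult_assoc.
      apply Rmult_le_compat_r; [easy|].
      apply Rmult_le_compat_r; [apply pow_le; lra | apply Rle_pow; [lra | lia]].
  - apply (ex_series_incr_n (fun k => (2 * r) ^ k / INR (fact k)) (S N)), ex_series_exp.
Qed.

(* Since [catalan_partial (S N) <= 2^(S N)], the factor is absorbed by doubling the radius. *)
Lemma is_lim_seq_catalan_partial_tail (f : nat -> R) r : 0 <= r ->
  (forall k, Rabs (f k) <= r ^ k / INR (fact k)) ->
  is_lim_seq (fun N => catalan_partial (S N) * (Series f - sum_n f N)) 0.
Proof.
  intros Hr Hf.
  apply is_lim_seq_le_le with (fun N => - exp_tail (2 * r) N) (exp_tail (2 * r)).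
  - intros N; assert (B := Rabs_Series_minus_sum_le_exp_tail f r N Hr Hf).
    assert (Sc := pow_mult_exp_tail_le r N Hr).
    destruct (catalan_partial_bound (S N)) as [W1 W2].
    apply Rabs_le_between; rewrite Rabs_mult, Rabs_pos_eq by easy.
    eapply Rle_trans; [|exact Sc].
    apply Rmult_le_compat; auto using Rabs_pos.
  - assert (H := proj1 (is_lim_seq_opp _ _) (is_lim_seq_exp_tail (2 * r))).
    simpl in H; now rewrite Ropp_0 in H.
  - apply is_lim_seq_exp_tail.
Qed.

Lemma Rrem_CPSeries n y : Rrem n y = (CPSeries exp_ps y - sum_n (CPS_term exp_ps y) n)%C.
Proof.
  unfold Rrem; rewrite Cexp_CPSeries; f_equal; apply sum_n_ext; intros k.
  unfold CPS_term, exp_ps; apply Cdiv_RtoC, INR_fact_neq_0.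
Qed.

Ltac C_ring := match goal with |- ?x = ?z => change (@eq C x z) end; ring.

Lemma Rrem_S n y : Rrem (S n) y = (Rrem n y - y ^ S n / RtoC (INR (fact (S n))))%C.
Proof. unfold Rrem; rewrite sum_Sn; change plus with Cplus; C_ring. Qed.

Lemma sum_n_Catalan_Rrem y N :
  sum_n (fun n => (RtoC (Catalan n / 2 ^ n) * Rrem n y)%C) N
  = (RtoC (catalan_partial (S N)) * Rrem N y + sum_n (CPS_term h_ps y) N)%C.
Proof.
  induction N as [|N IH].
  - rewrite !sum_O; unfold CPS_term, h_ps; simpl catalan_partial; simpl pow.
    replace (0 / INR (fact 0)) with 0 by (simpl; field).
    rewrite Rplus_0_l; change (y ^ 0)%C with (RtoC 1); C_ring.
  - rewrite !sum_Sn, IH, Rrem_S; change plus with Cplus.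
    change (catalan_partial (S (S N)))
      with (catalan_partial (S N) + Catalan (S N) / 2 ^ S N).
    unfold CPS_term, h_ps; rewrite Cdiv_RtoC by apply INR_fact_neq_0.
    unfold Rdiv; rewrite RtoC_plus, !RtoC_mult; C_ring.
Qed.

Lemma Rabs_exp_ps k : Rabs (exp_ps k) = / INR (fact k).
Proof. apply Rabs_pos_eq, Rlt_le, Rinv_0_lt_compat, INR_fact_lt_0. Qed.

Lemma is_series_Catalan_Rrem y :
  is_series (fun n => (RtoC (Catalan n / 2 ^ n) * Rrem n y)%C) (CPSeries h_ps y).
Proof.
  unfold is_series; eapply filterlim_ext; [intros N; symmetry; apply sum_n_Catalan_Rrem|].
  unfold CPSeries at 1, CSeries; apply is_lim_seq_C.
  - apply is_lim_seq_ext with (fun N => catalan_partial (S N) *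
        (Series (fun k => fst (CPS_term exp_ps y k)) - sum_n (fun k => fst (CPS_term exp_ps y k)) N)
        + sum_n (fun k => fst (CPS_term h_ps y k)) N).
    { intros N; rewrite Rrem_CPSeries, <- !fst_sum_n; simpl; ring. }
    rewrite <- (Rplus_0_l (Series (fun k => fst (CPS_term h_ps y k)))).
    apply is_lim_seq_plus'.
    + apply (is_lim_seq_catalan_partial_tail _ (Cmod y)); [apply Cmod_ge_0|].
      intros k; eapply Rle_trans; [apply Rabs_fst_CPS_term_le|].
      rewrite Rabs_exp_ps; right; unfold Rdiv; ring.
    + apply Series_correct, ex_series_fst_CPS_term, entire_h.
  - apply is_lim_seq_ext with (fun N => catalan_partial (S N) *
        (Series (fun k => snd (CPS_term exp_ps y k)) - sum_n (fun k => snd (CPS_term exp_ps y k)) N)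
        + sum_n (fun k => snd (CPS_term h_ps y k)) N).
    { intros N; rewrite Rrem_CPSeries, <- !snd_sum_n; simpl; ring. }
    rewrite <- (Rplus_0_l (Series (fun k => snd (CPS_term h_ps y k)))).
    apply is_lim_seq_plus'.
    + apply (is_lim_seq_catalan_partial_tail _ (Cmod y)); [apply Cmod_ge_0|].
      intros k; eapply Rle_trans; [apply Rabs_snd_CPS_term_le|].
      rewrite Rabs_exp_ps; right; unfold Rdiv; ring.
    + apply Series_correct, ex_series_snd_CPS_term, entire_h.
Qed.

Open Scope C_scope.

Theorem mainTheorem15 (y : C) :
  is_series (fun n => RtoC (Catalan n / 2 ^ n)%R * Rrem n y)
    (Cexp y * (1 - BesselI0 y
               + CSeries (fun n => y ^ (2 * n + 1) /
                     RtoC (4 ^ n * (INR (fact n)) ^ 2 * INR (2 * n + 1))%R)))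
  /\
  Cexp y * (1 - BesselI0 y
            + CSeries (fun n => y ^ (2 * n + 1) /
                  RtoC (4 ^ n * (INR (fact n)) ^ 2 * INR (2 * n + 1))%R))
  = Cexp y * (1 + (y - 1) * BesselI0 y
              + RtoC PI * y / 2 * (BesselI0 y * StruveL1 y - BesselI1 y * StruveL0 y)).
Proof.
  rewrite <- CPSeries_g; split.
  - rewrite Cexp_CPSeries, <- CPSeries_mult, <- h_ps_eq by auto using entire_exp, entire_g.
    apply is_series_Catalan_Rrem.
  - f_equal; unfold g_ps.
    rewrite !CPSeries_lin, CPSeries_one, CPSeries_j_struve
      by auto using entire_lin, entire_one, entire_i0, entire_j.
    rewrite BesselI0_CPSeries, BesselI1_CPSeries, StruveL0_CPSeries, StruveL1_CPSeries.
    replace (RtoC PI * y / 2) with (RtoC (PI / 2) * y)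
      by (destruct y; unfold Cdiv, Cinv, Cmult, RtoC; simpl; f_equal; field).
    ring.
Qed.
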